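(* Let $n\geq2$ be an integer, $\beta\in\mathbb{Z}_p$, and let $A\in\mathbb{L}_p$ be any element with \[A=(-1)^n\zeta_{2(p-1)}p^{\frac{1}{p^{n-1}(p-1)}}\sigma_n\left(1+(-1)^n\beta\zeta_{2(p-1)}p^{\frac{1}{p^{n-1}(p-1)}}\right)+O\!\left(p^{\frac{2}{p^{n-1}(p-1)}}\right).\] Then, writing $\zeta=\zeta_{2(p-1)}$, \begin{align*} \zeta_{p^{n+1}}-\sum_{k=0}^{p-1}\frac{(-1)^k}{k!}A^k={}&(-1)^{n+1}\zeta p^{\frac{2p-1}{p^n(p-1)}}\sigma_{n+1}+\sum_{k=1}^{p-1}\frac{(-1)^k(k\beta-H_k)}{k!}(-1)^{nk+n+1}\zeta^{k+1}p^{\frac{k+p}{p^n(p-1)}}\\ &+\beta\zeta^2p^{\frac{2}{p^{n-1}(p-1)}}\sigma_{n+1}-\mathds{1}_3(p)\cdot\frac{(-1)^n}{2}\zeta^3p^{\frac{2p^2-p+2}{p^{n+1}(p-1)}}+O\!\left(p^{\frac{2}{p^{n-1}(p-1)}}\right), \end{align*} where $\mathds{1}_3(p)=1$ if $p=3$ and $0$ otherwise.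
   Context: $p\geq 3$ is a prime. $\mathbb{L}_p=W(\bar{\mathbb{F}}_p)((p^{\mathbb{Q}}))$ is the $p$-adic Mal'cev–Neumann field: each element is uniquely $\sum_{x\in\mathbb{Q}}[\alpha_x]p^x$ with $\alpha_x\in\bar{\mathbb{F}}_p$, $[\cdot]$ the Teichmüller lift, and well-ordered support; it is an algebraically closed complete field with valuation $v_p(\alpha)=\min$ of the support ($v_p(p)=1$), containing $\bar{\mathbb{Q}}_p$ via a fixed continuous embedding. For $x\in\mathbb{Q}$, $p^x$ denotes $[1]p^x$. For $r\in\mathbb{Q}$, ''$\alpha=\beta+O(p^r)$'' means $v_p(\alpha-\beta)\geq r$. $H_k=\sum_{i=1}^k1/i$. For $n\geq1$, $\sigma_n=\sum_{k=n}^{\infty}p^{-1/p^k}\in\mathbb{L}_p$. Fix a primitive $2(p-1)$-th root of unity $\zeta_{2(p-1)}\in W(\bar{\mathbb{F}}_p)$ and a system $(\zeta_{p^n})_{n\geq1}$ of primitive $p^n$-th roots of unity in $\mathbb{L}_p$ with $\zeta_{p^{n+1}}^p=\zeta_{p^n}$, normalized (as established in earlier work of the authors) so that for every $n\geq2$, writing $\zeta=\zeta_{2(p-1)}$, \[\zeta_{p^n}=\sum_{k=0}^{p-1}\frac{(-1)^{nk}}{k!}\zeta^k p^{\frac{k}{p^{n-1}(p-1)}}+\sum_{k=0}^{p-1}\frac{(-1)^{n(k+1)}}{k!}\zeta^{k+1}p^{\frac{k+p}{p^{n-1}(p-1)}}\sigma_n-\sum_{k=1}^{p-1}\frac{H_k}{k!}(-1)^{n(k+1)}\zeta^{k+1}p^{\frac{k+p}{p^{n-1}(p-1)}}+\frac12\zeta^2p^{\frac{2}{p^{n-2}(p-1)}}\sigma_n^2+\frac{(-1)^n}{2}\zeta^3p^{\frac{2}{p^{n-2}(p-1)}-\frac{p-2}{p^n(p-1)}}+O\!\left(p^{\frac{2}{p^{n-2}(p-1)}}\right).\]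 *)

From HB Require Import structures.
From mathcomp Require Import all_boot all_order all_algebra.
Set Implicit Arguments. Unset Strict Implicit. Unset Printing Implicit Defensive.
Import Order.TTheory GRing.Theory Num.Theory.
Local Open Scope ring_scope.

(* "v(x) >= r", with v(0) = +oo encoded by None *)
Definition vge (L : Type) (v : L -> option rat) (x : L) (r : rat) : bool :=
  if v x is Some q then r <= q else true.

Definition dd (p m : nat) : rat := (p%:R ^+ m) * (p%:R - 1).

Definition harm (F : fieldType) (k : nat) : F := \sum_(1 <= i < k.+1) (i%:R)^-1.

Definition invfact (F : fieldType) (k : nat) : F := ((k`!)%:R)^-1.

(* The right-hand side of the normalization formula for zeta_{p^n}
   (without its error term O(p^{2/(p^{n-2}(p-1))})). *)
Definition zeta_expansion (F : fieldType) (p : nat) (ppow : rat -> F)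
    (zeta : F) (sigma : nat -> F) (n : nat) : F :=
  \sum_(k < p) (-1) ^+ (n * k) * invfact F k * zeta ^+ k
                * ppow (k%:R / dd p n.-1)
  + \sum_(k < p) (-1) ^+ (n * k.+1) * invfact F k * zeta ^+ k.+1
                * ppow ((k + p)%:R / dd p n.-1) * sigma n
  - \sum_(1 <= k < p) harm F k * invfact F k * (-1) ^+ (n * k.+1)
                * zeta ^+ k.+1 * ppow ((k + p)%:R / dd p n.-1)
  + 2^-1 * zeta ^+ 2 * ppow (2 / dd p (n - 2)) * sigma n ^+ 2
  + (-1) ^+ n * 2^-1 * zeta ^+ 3
      * ppow (2 / dd p (n - 2) - (p%:R - 2) / dd p n).

(* The data (L_p, v_p, x |-> p^x, zeta_{2(p-1)}, sigma_n, zeta_{p^n})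
   together with the properties of them that hold in L_p. *)
Record MNField (p : nat) := {
  MNcar :> fieldType;
  vp : MNcar -> option rat;
  vp_eq0 : forall x, (vp x == None) = (x == 0);
  vpM : forall x y a b, vp x = Some a -> vp y = Some b ->
                         vp (x * y) = Some (a + b);
  vpD : forall x y r, vge vp x r -> vge vp y r -> vge vp (x + y) r;
  vp_nat : forall m, (0 < m)%N -> vp (m%:R) = Some ((logn p m)%:R);
  char0 : [pchar MNcar] =i pred0;
  ppow : rat -> MNcar;
  ppowD : forall x y, ppow (x + y) = ppow x * ppow y;
  ppow1 : ppow 1 = p%:R;
  vp_ppow : forall x, vp (ppow x) = Some x;
  zeta : MNcar;
  zeta_prim : (2 * (p - 1)).-primitive_root zeta;
  sigma : nat -> MNcar;                         (* sigma_n = sum_{k>=n} p^{-1/p^k} *)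
  sigmaS : forall n, (1 <= n)%N ->
     sigma n = ppow (- (p%:R ^+ n)^-1) + sigma n.+1;
  vp_sigma : forall n, (1 <= n)%N -> vp (sigma n) = Some (- (p%:R ^+ n)^-1);
  zp : nat -> MNcar;
  zp_prim : forall n, (1 <= n)%N -> (p ^ n).-primitive_root (zp n);
  zp_compat : forall n, (1 <= n)%N -> zp n.+1 ^+ p = zp n;
  zp_norm : forall n, (2 <= n)%N ->
     vge vp (zp n - @zeta_expansion MNcar p ppow zeta sigma n) (2 / dd p (n - 2))
}.

From HB Require Import structures.
From mathcomp Require Import all_boot all_order all_algebra.
From mathcomp Require Import ring lra zify.
Import Order.TTheory GRing.Theory Num.Theory.
Local Open Scope ring_scope.
Set Implicit Arguments. Unset Strict Implicit. Unset Printing Implicit Defensive.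

(* Put [unif = p^(1/(p^n(p-1)))], [X = (-1)^(n+1) zeta unif] and [Y = -A - X], and let
   [E_m(x) = sum_(j<m) x^j/j!].  Then [sum_(k<p) (-1)^k A^k/k! = E_p(X + Y)
   = sum_(i<p) Y^i/i! E_(p-i)(X)], whereas the normalization of [zeta_(p^(n+1))] reads
   [E_p(X) (1 + Y1) + Y1^2/2 - (harmonic sum) + (cubic term)], where [Y1] is the
   [sigma_(n+1)]-part of [Y].  Splitting [Y = Y1 + Y2 + Y3 - errA] along the given expansion
   of [A], the difference of the two sides of the claim becomes a sum of seven explicit terms,
   each of valuation at least [2/(p^(n-1)(p-1))].  Wilson's theorem and [zeta^(p-1) = -1]
   turn the top term of [E_p(X)] into the [sigma_(n+1)] term of the claim; for [p > 3] the
   cubic term cancels against [Y1^2 X/2], which does not occur when [p = 3] since [E_1(X) = 1]. *)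

Section Valuation.
Variables (p : nat) (M : MNField p).
Implicit Types (x y : MNcar M) (r s : rat).
Local Notation vp := (@vp p M).
Local Notation vge := (vge vp).

Lemma vp0 : vp 0 = None.
Proof. by apply/eqP; rewrite vp_eq0. Qed.

Lemma vge0 r : vge 0 r.
Proof. by rewrite /vge vp0. Qed.

Lemma vp_neq0 x : x != 0 -> exists r, vp x = Some r.
Proof.
by case E: (vp x) => [r|]; [exists r | move/eqP: E; rewrite vp_eq0 => ->].
Qed.

Lemma vge_le x r s : vge x r -> s <= r -> vge x s.
Proof. by rewrite /vge; case: (vp x) => // q qr sr; exact: le_trans sr qr. Qed.

Lemma vgeM x y r s : vge x r -> vge y s -> vge (x * y) (r + s).
Proof.
have [->|/vp_neq0[a Ex]] := eqVneq x 0; first by rewrite mul0r => _ _; apply: vge0.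
have [->|/vp_neq0[b Ey]] := eqVneq y 0; first by rewrite mulr0 => _ _; apply: vge0.
by rewrite /vge (vpM Ex Ey) Ex Ey; apply: lerD.
Qed.

Lemma vp1 : vp 1 = Some 0.
Proof. by have := vp_nat M (isT : 0 < 1)%N; rewrite logn1. Qed.

Lemma vpV x r : vp x = Some r -> vp x^-1 = Some (- r).
Proof.
move=> Ex; have x0 : x != 0 by rewrite -vp_eq0 Ex.
have [s Es] : exists s, vp x^-1 = Some s by apply: vp_neq0; rewrite invr_eq0.
have := vpM Ex Es; rewrite mulfV // vp1 Es => -[/eqP].
by rewrite eq_sym addrC addr_eq0 => /eqP ->.
Qed.

Lemma vpN1 : vp (-1) = Some 0.
Proof.
have [r Er] : exists r, vp (-1) = Some r by apply: vp_neq0; rewrite oppr_eq0 oner_eq0.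
have := vpM Er Er; rewrite mulrNN mulr1 vp1 Er => -[/eqP].
by rewrite eq_sym -mulr2n -mulr_natr mulf_eq0 pnatr_eq0 orbF => /eqP ->.
Qed.

Lemma vgeN x r : vge x r -> vge (- x) r.
Proof. by move=> h; rewrite -mulN1r -[r]add0r; apply: vgeM; rewrite // /vge vpN1. Qed.

Lemma vgeB x y r : vge x r -> vge y r -> vge (x - y) r.
Proof. by move=> hx /vgeN; apply: vpD. Qed.

Lemma vge_sum (I : eqType) (s : seq I) (P : pred I) (F : I -> MNcar M) r :
  {in s, forall i, P i -> vge (F i) r} -> vge (\sum_(i <- s | P i) F i) r.
Proof.
move=> hF; rewrite big_seq_cond.
apply: (big_ind (vge^~ r)) => [|x y|i /andP[]]; [exact: vge0 | exact: vpD | exact: hF].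
Qed.

Lemma vgeX x r k : vge x r -> vge (x ^+ k) (k%:R * r).
Proof.
move=> hx; elim: k => [|k IHk]; first by rewrite mul0r /vge vp1.
by rewrite exprS mulrSr mulrDl mul1r addrC; apply: vgeM.
Qed.

Lemma vge_ppow r : vge (ppow M r) r.
Proof. by rewrite /vge vp_ppow. Qed.

Lemma vge_nat m : vge m%:R 0.
Proof. by case: m => [|m]; rewrite ?vge0 // /vge vp_nat. Qed.

Lemma vge_sign k : vge ((-1) ^+ k) 0.
Proof. by have := @vgeX (-1) 0 k; rewrite mulr0; apply; rewrite /vge vpN1. Qed.

Lemma ppow0 : ppow M 0 = 1.
Proof.
have p0 : ppow M 0 != 0 by rewrite -vp_eq0 vp_ppow.
by apply: (mulfI p0); rewrite -ppowD addr0 mulr1.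
Qed.

Lemma ppowMn k r : ppow M (k%:R * r) = ppow M r ^+ k.
Proof.
elim: k => [|k IHk]; first by rewrite mul0r ppow0.
by rewrite mulrSr mulrDl mul1r ppowD IHk exprSr.
Qed.

Hypothesis p_prime : prime p.

Lemma vge_invfact k : (k < p)%N -> vge (invfact _ k) 0.
Proof.
move=> kp; rewrite /vge /invfact (vpV (vp_nat M (fact_gt0 k))) logn_fact //.
rewrite big1_seq ?oppr0 // => j /andP[_]; rewrite mem_index_iota => /andP[j1 _].
rewrite divn_small // (leq_trans kp) // -{1}(expn1 p).
by rewrite leq_exp2l ?prime_gt1.
Qed.

(* By Wilson's theorem, [p] divides [(p-1)! + 1]. *)
Lemma vge_invfact_pred_add1 : vge (invfact _ p.-1 + 1) 1.
Proof.
have := Wilson (prime_gt1 p_prime); rewrite p_prime => /esym/dvdnP[c Ec].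
have f0 : (p.-1`!%:R : MNcar M) != 0 by have /pcharf0P -> := char0 M; rewrite -lt0n fact_gt0.
have -> : invfact _ p.-1 + 1 = c%:R * p%:R * invfact (MNcar M) p.-1.
  by rewrite -natrM -Ec -addn1 natrD mulrDl /invfact mulfV // mul1r addrC.
have vp_p : vge p%:R 1 by rewrite /vge vp_nat ?prime_gt0 // logn_prime // eqxx.
have vf : vge (invfact _ p.-1) 0 by apply: vge_invfact; rewrite prednK ?prime_gt0.
by apply: vge_le (vgeM (vgeM (vge_nat c) vp_p) vf) _; rewrite add0r addr0.
Qed.

Lemma vge_zeta : vge (zeta M) 0.
Proof.
have pz := zeta_prim M; have ord_gt0 : (0 < 2 * (p - 1))%N.
  by rewrite muln_gt0 subn_gt0 prime_gt1.
have [r Er] : exists r, vp (zeta M) = Some r.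
  apply: vp_neq0; apply/eqP => z0; move: (prim_expr_order pz).
  by rewrite z0 expr0n gtn_eqF //= => /esym/eqP; rewrite oner_eq0.
have [r0] : (2 * (p - 1))%:R * r = 0.
  have Ek : vp (zeta M ^+ (2 * (p - 1))) = Some ((2 * (p - 1))%:R * r).
    elim: (2 * (p - 1))%N => [|k IHk]; first by rewrite mul0r vp1.
    by rewrite exprSr (vpM IHk Er) mulrSr mulrDl mul1r.
  by move: Ek; rewrite prim_expr_order // vp1 => -[].
by move/eqP: r0; rewrite mulf_eq0 pnatr_eq0 gtn_eqF //= => /eqP r0; rewrite /vge Er r0.
Qed.

Lemma zeta_pred : zeta M ^+ p.-1 = -1.
Proof.
have pz := zeta_prim M; have p1 := prime_gt1 p_prime.
have sq1 : (zeta M ^+ p.-1) ^+ 2 = 1 by rewrite -exprM mulnC -subn1 prim_expr_order.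
have ne1 : zeta M ^+ p.-1 != 1.
  rewrite -(prim_order_dvd pz); apply/negP => /dvdn_leq.
  by rewrite -subn1; move: p1; clear; lia.
move/eqP: sq1; rewrite -subr_eq0 subr_sqr_1 mulf_eq0 subr_eq0 (negbTE ne1) /=.
by rewrite addr_eq0 => /eqP.
Qed.

End Valuation.

Definition exp_trunc (F : fieldType) (m : nat) (x : F) : F :=
  \sum_(0 <= j < m) x ^+ j * invfact F j.

Lemma invfact0 (F : fieldType) : invfact F 0 = 1.
Proof. by rewrite /invfact invr1. Qed.

Lemma invfact1 (F : fieldType) : invfact F 1 = 1.
Proof. by rewrite /invfact invr1. Qed.

Lemma sum_triangle (R : nmodType) (g : nat -> nat -> R) m :
  \sum_(0 <= k < m) \sum_(0 <= i < k.+1) g i (k - i)%N =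
  \sum_(0 <= i < m) \sum_(0 <= j < m - i) g i j.
Proof.
elim: m => [|m IHm]; first by rewrite !big_geq.
rewrite big_nat_recr //= IHm.
transitivity (\sum_(0 <= i < m.+1) (\sum_(0 <= j < m - i) g i j + g i (m - i)%N)).
  by rewrite big_split /= [in RHS]big_nat_recr //= subnn (big_geq (leqnn 0)) addr0.
by apply: eq_big_nat => i /andP[_ im]; rewrite subSn // big_nat_recr.
Qed.

Section TruncatedExponential.
Variables (F : fieldType) (F_char0 : [pchar F] =i pred0).

Lemma natf_fact_neq0 k : (k`!%:R : F) != 0.
Proof. by have /pcharf0P -> := F_char0; rewrite -lt0n fact_gt0. Qed.

Lemma invfactS k : k.+1%:R * invfact F k.+1 = invfact F k.
Proof.
have k1 : (k.+1%:R : F) != 0 by have /pcharf0P -> := F_char0.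
by rewrite /invfact factS natrM invfM mulrA mulfV // mul1r.
Qed.

Lemma exp_truncD x y m :
  exp_trunc m (x + y) = \sum_(0 <= i < m) y ^+ i * invfact F i * exp_trunc (m - i) x.
Proof.
rewrite /exp_trunc; under [RHS]eq_bigr => i _ do rewrite mulr_sumr.
rewrite -(sum_triangle (fun i j => y ^+ i * invfact F i * (x ^+ j * invfact F j))).
apply: eq_bigr => k _; rewrite exprDn mulr_suml big_mkord; apply: eq_bigr => i _.
have binE : ('C(k, i)%:R : F) * invfact F k = invfact F i * invfact F (k - i).
  have Ck0 : ('C(k, i)%:R : F) != 0.
    by have /pcharf0P -> := F_char0; rewrite -lt0n bin_gt0 -ltnS.
  rewrite /invfact -(bin_fact (leq_ord i)) !natrM; field.
  by rewrite Ck0 !natf_fact_neq0.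
by rewrite -mulr_natr -!mulrA binE; ring.
Qed.

End TruncatedExponential.

Lemma sign_cases (R : pzRingType) k : (-1) ^+ k = 1 :> R \/ (-1) ^+ k = -1 :> R.
Proof. by rewrite -signr_odd; case: odd; [right; rewrite expr1 | left]. Qed.

Lemma signr_addn_double (R : pzRingType) a b : (-1) ^+ (a + b.*2) = (-1) ^+ a :> R.
Proof. by rewrite -mul2n mulnC exprD exprM sqrr_sign mulr1. Qed.

Section Expansion.
Variables (p : nat) (M : MNField p) (n : nat) (beta A : MNcar M).
Hypotheses (p_prime : prime p) (p_ge3 : (3 <= p)%N) (n_ge2 : (2 <= n)%N).

Local Notation F := (MNcar M).
Local Notation vge := (vge (@vp p M)).
Local Notation P := (p%:R : rat).

Let p_gt0 : (0 < p)%N. Proof. exact: prime_gt0. Qed.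
Let P_ge3 : 3 <= P. Proof. by rewrite (ler_nat _ 3). Qed.

Let p_odd : odd p.
Proof. by apply/negPn/negP => /(prime_oddPn p_prime) p2; move: p_ge3; rewrite p2. Qed.

(* [w] is the valuation of [p^(1/(p^(n+2)(p-1)))]; all valuations below are integer
   polynomials in [P] times [w]. *)
Let w : rat := (dd p n.+2)^-1.

Let w_gt0 : 0 < w.
Proof. rewrite invr_gt0 mulr_gt0 ?exprn_gt0 //; have := P_ge3; lra. Qed.

Lemma inv_dd_w k m : (k + m)%N = n.+2 -> (dd p m)^-1 = P ^+ k * w.
Proof.
move=> km; rewrite /w -km /dd exprD; have := P_ge3 => P3.
by field; rewrite !expf_neq0 !gt_eqF //; lra.
Qed.

Lemma invPX_w k m : (k + m)%N = n.+2 -> (P ^+ m)^-1 = (P - 1) * P ^+ k * w.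
Proof.
move=> km; rewrite /w -km /dd exprD; have := P_ge3 => P3.
by field; rewrite !expf_neq0 !gt_eqF //; lra.
Qed.

Lemma err_w : 2 / dd p n.-1 = 2 * P ^+ 3 * w.
Proof. by rewrite (@inv_dd_w 3) ?mulrA //; lia. Qed.

Lemma err_le1 : 2 / dd p n.-1 <= 1.
Proof.
rewrite ler_pdivrMr ?mul1r /dd; last by rewrite mulr_gt0 ?exprn_gt0 //; have := P_ge3; lra.
have := P_ge3; have : 1 <= P ^+ n.-1 by rewrite exprn_ege1 //; have := P_ge3; lra.
by move: (P ^+ n.-1) => q; nra.
Qed.

Lemma vgewM x y a b : vge x (a * w) -> vge y (b * w) -> vge (x * y) ((a + b) * w).
Proof. by rewrite mulrDl; apply: vgeM. Qed.

Lemma vgew_le x a b : vge x (a * w) -> b <= a -> vge x (b * w).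
Proof. by move=> hx ba; apply: vge_le hx _; rewrite ler_wpM2r // ltW. Qed.

Lemma vgewX x a k : vge x (a * w) -> vge (x ^+ k) ((k%:R * a) * w).
Proof. by rewrite -mulrA; apply: vgeX. Qed.

Lemma vgew0 (x : F) : vge x 0 -> vge x (0 * w).
Proof. by rewrite mul0r. Qed.

Definition unif : F := ppow M (dd p n)^-1.

Lemma unifX k : unif ^+ k = ppow M (k%:R / dd p n).
Proof. by rewrite -ppowMn. Qed.

Lemma unifX_p : ppow M (1 / dd p n.-1) = unif ^+ p.
Proof. by rewrite unifX (@inv_dd_w 3) ?(@inv_dd_w 2) // ?mul1r ?exprS ?mulrA //; lia. Qed.

Lemma unifX_2p : ppow M (2 / dd p n.-1) = unif ^+ (2 * p).
Proof. by rewrite unifX (@inv_dd_w 3) ?(@inv_dd_w 2) // ?natrM ?exprS ?mulrA //; lia. Qed.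

Lemma unifX_p_sigma : unif ^+ p * ppow M (- (P ^+ n)^-1) = unif.
Proof.
rewrite unifX -ppowD /unif (@inv_dd_w 2) // (@invPX_w 2) //.
by congr ppow; ring.
Qed.

Lemma vge_unif : vge unif (P ^+ 2 * w).
Proof. by rewrite -(@inv_dd_w 2 n) //; apply: vge_ppow. Qed.

Lemma vge_sigma k m : (k + m)%N = n.+2 -> (0 < m)%N ->
  vge (sigma M m) (- ((P - 1) * P ^+ k) * w).
Proof. by move=> km m0; rewrite /vge vp_sigma // (invPX_w km) mulNr. Qed.

Definition X : F := (-1) ^+ n.+1 * zeta M * unif.
Definition Y1 : F := (-1) ^+ n.+1 * zeta M * unif ^+ p * sigma M n.+1.
Definition Y2 : F := - (beta * zeta M ^+ 2 * unif ^+ p.+1).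
Definition Y3 : F := - (beta * zeta M ^+ 2 * unif ^+ (2 * p) * sigma M n.+1).
Definition errA : F :=
  A - (-1) ^+ n * zeta M * ppow M (1 / dd p n.-1) * sigma M n
        * (1 + (-1) ^+ n * beta * zeta M * ppow M (1 / dd p n.-1)).
Definition Y : F := - A - X.

Lemma Y_decomposition : Y = Y1 + Y2 + Y3 - errA.
Proof.
rewrite /Y /errA /X /Y1 /Y2 /Y3 unifX_p (sigmaS M (ltnW n_ge2)).
rewrite [unif ^+ p.+1]exprSr mul2n -addnn exprD exprS.
have := unifX_p_sigma; move: (unif ^+ p) (ppow M _) => up q <-.
by case: (sign_cases F n) => ->; ring.
Qed.

Lemma exp_trunc_signed_A :
  \sum_(k < p) (-1) ^+ k * invfact F k * A ^+ k =
    exp_trunc p X + Y * exp_trunc p.-1 X + 2^-1 * Y ^+ 2 * exp_trunc (p - 2) X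
    + \sum_(3 <= i < p) Y ^+ i * invfact F i * exp_trunc (p - i) X.
Proof.
transitivity (exp_trunc p (X + Y)).
  by rewrite /Y addrC subrK /exp_trunc big_mkord; apply: eq_bigr => k _; rewrite (exprNn A) mulrAC.
rewrite (exp_truncD (char0 M)) big_ltn // big_ltn ?prime_gt1 // big_ltn //.
by rewrite invfact0 invfact1 (_ : invfact F 2 = 2^-1) // subn0 subn1; ring.
Qed.

Definition harmonic_sum : F :=
  \sum_(1 <= k < p) harm F k * invfact F k * (-1) ^+ (n.+1 * k.+1) * zeta M ^+ k.+1
                     * ppow M ((k + p)%:R / dd p n).

Definition cubic_term : F :=
  (-1) ^+ n.+1 * 2^-1 * zeta M ^+ 3 * ppow M ((2 * p ^ 2 - p + 2)%:R / dd p n.+1).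

Lemma zeta_expansionS :
  @zeta_expansion F p (ppow M) (zeta M) (sigma M) n.+1 =
    exp_trunc p X + Y1 * exp_trunc p X - harmonic_sum + 2^-1 * Y1 ^+ 2 + cubic_term.
Proof.
have n2 : (n.+1 - 2)%N = n.-1 by lia.
rewrite /zeta_expansion [n.+1.-1]/= n2; congr (_ + _ - _ + _ + _).
- rewrite /exp_trunc big_mkord; apply: eq_bigr => k _.
  by rewrite -unifX /X !exprMn -exprM; ring.
- rewrite /exp_trunc big_mkord mulr_sumr; apply: eq_bigr => k _.
  by rewrite -unifX /Y1 /X !exprMn -!exprM mulnS exprD [zeta M ^+ k.+1]exprS exprD; ring.
- by rewrite unifX_2p /Y1 !exprMn sqrr_sign mulnC exprM; ring.
- rewrite /cubic_term; congr (_ * ppow M _).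
  rewrite (@inv_dd_w 3) ?(@inv_dd_w 1 n.+1) //; last by lia.
  have p2 : (p <= 2 * p ^ 2)%N by rewrite expnS expn1 mulnA leq_pmull // muln_gt0.
  by rewrite natrD natrB // natrM natrX; ring.
Qed.

Lemma first_rhs_term :
  (-1) ^+ n.+1 * zeta M * ppow M ((2 * p - 1)%:R / dd p n) * sigma M n.+1 = - (Y1 * X ^+ p.-1).
Proof.
have sign_pred : (-1) ^+ p.-1 = 1 :> F.
  by rewrite -signr_odd; move: p_odd; rewrite -{1}(prednK p_gt0) /= => /negbTE ->.
rewrite -unifX (_ : (2 * p - 1 = p + p.-1)%N); last by lia.
by rewrite exprD /Y1 /X !exprMn -exprM mulnC exprM sign_pred expr1n zeta_pred //; ring.
Qed.

Lemma second_rhs_term :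
  \sum_(1 <= k < p) (-1) ^+ k * (k%:R * beta - harm F k) * invfact F k
      * (-1) ^+ (n * k + n + 1) * zeta M ^+ k.+1 * ppow M ((k + p)%:R / dd p n) =
    - (Y2 * exp_trunc p.-1 X) - harmonic_sum.
Proof.
have signE k : (-1) ^+ k * (-1) ^+ (n * k + n + 1) = (-1) ^+ (n.+1 * k.+1) :> F.
  by rewrite -exprD; congr (_ ^+ _); lia.
apply: (addIr harmonic_sum); rewrite subrK /harmonic_sum -big_split /=.
rewrite /Y2 /exp_trunc mulNr opprK mulr_sumr big_add1 /=; apply: eq_big_nat => j _.
have signS : (-1) ^+ j.+1 * (-1) ^+ (n * j.+1 + n + 1) = (-1) ^+ (n.+1 * j) :> F.
  by rewrite signE (_ : n.+1 * j.+2 = n.+1 * j + (n.+1).*2)%N ?signr_addn_double //; lia.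
rewrite -signE -(invfactS (char0 M) j) -unifX /X !exprMn -exprM -signS.
by rewrite addSnnS [unif ^+ (j + _)]exprD !exprS; ring.
Qed.

Lemma third_rhs_term : beta * zeta M ^+ 2 * ppow M (2 / dd p n.-1) * sigma M n.+1 = - Y3.
Proof. by rewrite unifX_2p /Y3 opprK. Qed.

Lemma difference_decomposition :
  zp M n.+1 - \sum_(k < p) (-1) ^+ k * invfact F k * A ^+ k
  - ( (-1) ^+ n.+1 * zeta M * ppow M ((2 * p - 1)%:R / dd p n) * sigma M n.+1
    + \sum_(1 <= k < p) (-1) ^+ k * (k%:R * beta - harm F k) * invfact F k
         * (-1) ^+ (n * k + n + 1) * zeta M ^+ k.+1
         * ppow M ((k + p)%:R / dd p n)
    + beta * zeta M ^+ 2 * ppow M (2 / dd p n.-1) * sigma M n.+1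
    - (if p == 3%N then 1 else 0)
         * ((-1) ^+ n * 2^-1 * zeta M ^+ 3
            * ppow M ((2 * p ^ 2 - p + 2)%:R / dd p n.+1)))
  = (zp M n.+1 - @zeta_expansion F p (ppow M) (zeta M) (sigma M) n.+1)
    + Y1 * X ^+ p.-1 * (invfact F p.-1 + 1)
    - Y3 * (exp_trunc p.-1 X - 1)
    + errA * exp_trunc p.-1 X
    - 2^-1 * (Y ^+ 2 - Y1 ^+ 2) * exp_trunc (p - 2) X
    - \sum_(3 <= i < p) Y ^+ i * invfact F i * exp_trunc (p - i) X
    + (2^-1 * Y1 ^+ 2 * (1 - exp_trunc (p - 2) X) + (p != 3%N)%:R * cubic_term).
Proof.
rewrite exp_trunc_signed_A first_rhs_term second_rhs_term third_rhs_term zeta_expansionS.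
have -> : exp_trunc p X = exp_trunc p.-1 X + X ^+ p.-1 * invfact F p.-1.
  by rewrite /exp_trunc -(big_nat_recr _ _ _ (leq0n p.-1)) prednK.
have -> : (if p == 3%N then 1 else 0) = (p == 3%N)%:R :> F by case: (p == 3%N).
have -> : (p != 3%N)%:R = 1 - (p == 3%N)%:R :> F by case: (p == 3%N); rewrite ?subr0 ?subrr.
rewrite Y_decomposition /cubic_term [(-1) ^+ n.+1]exprS.
ring.
Qed.

Lemma cubic_termE :
  cubic_term = (-1) ^+ n.+1 * 2^-1 * zeta M ^+ 3 * unif ^+ (2 * p).+1
                 * ppow M (- (P ^+ n.+1)^-1) ^+ 2.
Proof.
rewrite /cubic_term unifX -ppowMn -[in RHS]mulrA -ppowD; congr (_ * ppow M _).
have p2 : (p <= 2 * p ^ 2)%N by rewrite expnS expn1 mulnA leq_pmull // muln_gt0.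
rewrite (@inv_dd_w 1) ?(@inv_dd_w 2) ?(@invPX_w 1) //.
by rewrite natrD natrB // natrM natrX -[(2 * p).+1]addn1 natrD natrM; ring.
Qed.

Lemma cubic_term_subE :
  cubic_term - 2^-1 * Y1 ^+ 2 * X =
    - ((-1) ^+ n.+1 * 2^-1 * zeta M ^+ 3 * unif ^+ (2 * p).+1
       * (sigma M n.+2 * (2 * ppow M (- (P ^+ n.+1)^-1) + sigma M n.+2))).
Proof.
rewrite cubic_termE /Y1 /X (@sigmaS _ M n.+1) // [unif ^+ (2 * p).+1]exprS mul2n -addnn exprD.
move: (ppow M _) (sigma M n.+2) => q s2.
by case: (sign_cases F n.+1) => ->; ring.
Qed.

Let vge_half : vge (2^-1 : F) 0 := vge_invfact M p_prime p_ge3.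

Lemma vge_X : vge X (P ^+ 2 * w).
Proof.
apply: vge_le (vgeM (vgeM (vge_sign M n.+1) (vge_zeta M p_prime)) vge_unif) _.
by rewrite !add0r.
Qed.

Lemma vge_Y1 : vge Y1 ((P ^+ 3 - P ^+ 2 + P) * w).
Proof.
apply: vgew_le (vgewM (vgewM (vgewM (vgew0 (vge_sign M n.+1)) (vgew0 (vge_zeta M p_prime)))
  (vgewX p vge_unif)) (@vge_sigma 1 n.+1 erefl isT)) _.
by have := P_ge3; nra.
Qed.

Lemma vge_exp_trunc_from a m : (m <= p)%N ->
  vge (\sum_(a <= j < m) X ^+ j * invfact F j) ((a%:R * P ^+ 2) * w).
Proof.
move=> mp; apply: vge_sum => j; rewrite mem_index_iota => /andP[aj jm] _.
apply: vgew_le (vgewM (vgewX j vge_X) (vgew0 (vge_invfact M p_prime (leq_trans jm mp)))) _.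
by rewrite addr0 ler_wpM2r ?sqr_ge0 ?ler_nat.
Qed.

Lemma vge_exp_trunc m : (m <= p)%N -> vge (exp_trunc m X) 0.
Proof. by move/(vge_exp_trunc_from 0); rewrite !mul0r. Qed.

Lemma vge_exp_trunc_sub1 m : (0 < m <= p)%N -> vge (exp_trunc m X - 1) (P ^+ 2 * w).
Proof.
case/andP=> m0 mp; rewrite /exp_trunc big_ltn // expr0 invfact0 mulr1 addrC addKr.
by have := vge_exp_trunc_from 1 mp; rewrite mul1r.
Qed.

Lemma vge_exp_trunc_sub1X m : (1 < m <= p)%N ->
  vge (exp_trunc m X - 1 - X) (2 * P ^+ 2 * w).
Proof.
case/andP=> m1 mp; rewrite /exp_trunc big_ltn 1?ltnW // big_ltn //.
rewrite expr0 expr1 invfact0 invfact1 !mulr1.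
set s := \sum_(2 <= j < m) _; have -> : 1 + (X + s) - 1 - X = s by ring.
by have := vge_exp_trunc_from 2 mp.
Qed.

Lemma vge_zeta_expansion_error :
  vge (zp M n.+1 - @zeta_expansion F p (ppow M) (zeta M) (sigma M) n.+1) (2 / dd p n.-1).
Proof. by have := zp_norm M (leqW n_ge2); rewrite subSS subn1. Qed.

Lemma vge_wilson_error : vge (Y1 * X ^+ p.-1 * (invfact F p.-1 + 1)) (2 / dd p n.-1).
Proof.
have vY1X : vge (Y1 * X ^+ p.-1) (0 * w).
  apply: vgew_le (vgewM vge_Y1 (vgewX p.-1 vge_X)) _.
  by have := P_ge3; have := ler0n rat p.-1; nra.
rewrite mul0r in vY1X; apply: vge_le (vgeM vY1X (vge_invfact_pred_add1 M p_prime)) _.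
by rewrite add0r err_le1.
Qed.

Lemma vge_cubic_term_sub : vge (cubic_term - 2^-1 * Y1 ^+ 2 * X) (2 * P ^+ 3 * w).
Proof.
have P3 := P_ge3.
have vq : vge (ppow M (- (P ^+ n.+1)^-1)) (- ((P - 1) * P) * w).
  by rewrite (@invPX_w 1) // expr1 -mulNr; apply: vge_ppow.
have v2q : vge (2 * ppow M (- (P ^+ n.+1)^-1) + sigma M n.+2) (- ((P - 1) * P) * w).
  apply: vpD; first by apply: vge_le (vgeM (vge_nat M 2) vq) _; rewrite add0r.
  by apply: vgew_le (@vge_sigma 0 n.+2 erefl isT) _; nra.
rewrite cubic_term_subE; apply: vgeN.
apply: vgew_le (vgewM (vgewM (vgewM (vgewM (vgew0 (vge_sign M n.+1)) (vgew0 vge_half))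
  (vgewX 3 (vgew0 (vge_zeta M p_prime)))) (vgewX (2 * p).+1 vge_unif))
  (vgewM (@vge_sigma 0 n.+2 erefl isT) v2q)) _.
by rewrite -[(2 * p).+1]addn1 natrD natrM; nra.
Qed.

Lemma vge_cubic_error :
  vge (2^-1 * Y1 ^+ 2 * (1 - exp_trunc (p - 2) X) + (p != 3%N)%:R * cubic_term)
      (2 / dd p n.-1).
Proof.
have [p3|p_ne3] := boolP (p == 3%N).
  rewrite [(~~ true)%:R]/= mulr0n mul0r addr0 /exp_trunc (_ : p - 2 = 1)%N ?(eqP p3) //.
  by rewrite big_nat1 expr0 invfact0 mulr1 subrr mulr0 vge0.
have p2 : (1 < p - 2 <= p)%N.
  by rewrite ltn_subRL leq_subr andbT ltn_neqAle eq_sym p_ne3.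
rewrite [(~~ false)%:R]/= mulr1n mul1r err_w.
rewrite (_ : 2^-1 * Y1 ^+ 2 * (1 - exp_trunc (p - 2) X) + cubic_term =
  - (2^-1 * Y1 ^+ 2 * (exp_trunc (p - 2) X - 1 - X)) + (cubic_term - 2^-1 * Y1 ^+ 2 * X));
  last by ring.
apply: vpD (vge_cubic_term_sub); apply: vgeN.
apply: vgew_le (vgewM (vgewM (vgew0 vge_half) (vgewX 2 vge_Y1)) (vge_exp_trunc_sub1X p2)) _.
by have := P_ge3; nra.
Qed.

Hypothesis beta_int : vge beta 0.

Lemma vge_Y2 : vge Y2 ((P ^+ 3 + P ^+ 2) * w).
Proof.
apply: vgeN; apply: vgew_le (vgewM (vgewM (vgew0 beta_int) (vgewX 2 (vgew0 (vge_zeta M p_prime))))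
  (vgewX p.+1 vge_unif)) _.
by rewrite -natr1; have := P_ge3; nra.
Qed.

Lemma vge_Y3 : vge Y3 ((2 * P ^+ 3 - P ^+ 2 + P) * w).
Proof.
apply: vgeN; apply: vgew_le (vgewM (vgewM (vgewM (vgew0 beta_int) (vgewX 2 (vgew0 (vge_zeta M p_prime))))
  (vgewX (2 * p) vge_unif)) (@vge_sigma 1 n.+1 erefl isT)) _.
by rewrite natrM; have := P_ge3; nra.
Qed.

Lemma vge_Y3_error : vge (Y3 * (exp_trunc p.-1 X - 1)) (2 / dd p n.-1).
Proof.
have p1 : (0 < p.-1 <= p)%N by rewrite leq_pred andbT -subn1 subn_gt0 prime_gt1.
by rewrite err_w; apply: vgew_le (vgewM vge_Y3 (vge_exp_trunc_sub1 p1)) _; have := P_ge3; nra.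
Qed.

Hypothesis errA_small : vge errA (2 / dd p n.-1).

Lemma vge_Y_sub_Y1 : vge (Y - Y1) ((P ^+ 3 + P ^+ 2) * w).
Proof.
rewrite Y_decomposition (_ : Y1 + Y2 + Y3 - errA - Y1 = Y2 + Y3 - errA); last by ring.
have := P_ge3 => P3; apply: vgeB; first apply: vpD.
- exact: vge_Y2.
- by apply: vgew_le vge_Y3 _; nra.
- by have := errA_small; rewrite err_w => hE; apply: vgew_le hE _; nra.
Qed.

Lemma vge_Y : vge Y ((P ^+ 3 - P ^+ 2 + P) * w).
Proof.
rewrite -(subrK Y1 Y); apply: vpD (vge_Y1).
by apply: vgew_le vge_Y_sub_Y1 _; have := P_ge3; nra.
Qed.

Lemma vge_errA_error : vge (errA * exp_trunc p.-1 X) (2 / dd p n.-1).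
Proof. by rewrite -[2 / _]addr0; apply: vgeM errA_small (vge_exp_trunc (leq_pred p)). Qed.

Lemma vge_square_error :
  vge (2^-1 * (Y ^+ 2 - Y1 ^+ 2) * exp_trunc (p - 2) X) (2 / dd p n.-1).
Proof.
rewrite subr_sqr err_w.
apply: vgew_le (vgewM (vgewM (vgew0 vge_half) (vgewM vge_Y_sub_Y1 (vpD vge_Y vge_Y1)))
  (vgew0 (vge_exp_trunc (leq_subr 2 p)))) _.
by have := P_ge3; nra.
Qed.

Lemma vge_tail_error :
  vge (\sum_(3 <= i < p) Y ^+ i * invfact F i * exp_trunc (p - i) X) (2 / dd p n.-1).
Proof.
rewrite err_w; apply: vge_sum => i; rewrite mem_index_iota => /andP[i3 ip] _.
apply: vgew_le (vgewM (vgewM (vgewX i vge_Y) (vgew0 (vge_invfact M p_prime ip)))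
  (vgew0 (vge_exp_trunc (leq_subr i p)))) _.
have P3 := P_ge3.
have : 0 <= (i%:R - 3) * (P ^+ 3 - P ^+ 2 + P).
  by rewrite mulr_ge0 // ?subr_ge0 ?(ler_nat _ 3) //; nra.
have : 0 <= P ^+ 2 * (P - 3) by rewrite mulr_ge0 ?sqr_ge0 ?subr_ge0.
by rewrite !addr0; nra.
Qed.

End Expansion.

Theorem corollary2p5 (p : nat) (M : MNField p) (n : nat) (beta A : MNcar M) :
  prime p -> (3 <= p)%N -> (2 <= n)%N ->
  vge (@vp p M) beta 0 ->                              (* beta integral *)
  vge (@vp p M)
    (A - (-1) ^+ n * zeta M * ppow M (1 / dd p n.-1) * sigma M n
          * (1 + (-1) ^+ n * beta * zeta M * ppow M (1 / dd p n.-1)))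
    (2 / dd p n.-1) ->
  vge (@vp p M)
    (zp M n.+1 - \sum_(k < p) (-1) ^+ k * @invfact (MNcar M) k * A ^+ k
      - ( (-1) ^+ n.+1 * zeta M * ppow M ((2 * p - 1)%:R / dd p n) * sigma M n.+1
        + \sum_(1 <= k < p) (-1) ^+ k * (k%:R * beta - @harm (MNcar M) k) * @invfact (MNcar M) k
             * (-1) ^+ (n * k + n + 1) * zeta M ^+ k.+1
             * ppow M ((k + p)%:R / dd p n)
        + beta * zeta M ^+ 2 * ppow M (2 / dd p n.-1) * sigma M n.+1
        - (if p == 3%N then 1 else 0)
             * ((-1) ^+ n * 2^-1 * zeta M ^+ 3
                * ppow M ((2 * p ^ 2 - p + 2)%:R / dd p n.+1))))
    (2 / dd p n.-1).
Proof.
move=> p_prime p_ge3 n_ge2 beta_int A_approx.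
rewrite difference_decomposition //.
apply: vpD; last exact: vge_cubic_error.
apply: vgeB; last exact: (vge_tail_error (beta := beta)).
apply: vgeB; last exact: (vge_square_error (beta := beta)).
apply: vpD; last exact: vge_errA_error.
apply: vgeB; last exact: vge_Y3_error.
apply: vpD; last exact: vge_wilson_error.
exact: vge_zeta_expansion_error.
Qed.
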